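(* Let $f(\xi) = i e^{\xi}$ on $U=\{\xi\in\mathbb{C} : |\operatorname{Im}\xi|<\pi/2\}$. Then the domain of the Burgers transform of $f$ is $\Omega_f = \mathbb{R}^2$. Moreover, with $\lambda=\mathcal{B}[f]$, $w_0=y-\lambda x$ and $J(x,y) = 1 + f'(w_0)\,x$, one has $|J(x,y)| \geq 1$ for all $(x,y) \in \mathbb{R}^2$, with equality only at $x = 0$.
   Context: $\mathbb{C}_+$ is the upper half-plane; $f$ maps $U$ into $\mathbb{C}_+$. The Burgers transform $\mathcal{B}[f]\colon\Omega_f\to\mathbb{C}_+$ is defined implicitly by $\mathcal{B}[f](x,y) = f(y - \mathcal{B}[f](x,y)\, x)$, where $\Omega_f \subseteq \mathbb{R}^2$ is the maximal open set on which this equation admits a unique $C^1$ solution with positive imaginary part. (Explicitly, $\mathcal{B}[f](x,y) = W_0(ixe^y)/x$ for $x\ne0$, with $W_0$ the principal branch of the Lambert $W$ function, and $\mathcal{B}[f](0,y)=ie^y$.) *)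

From Stdlib Require Import Reals.
From Coquelicot Require Import Coquelicot.
Open Scope R_scope.

Definition Cexp (z : C) : C := (exp (Re z) * cos (Im z), exp (Re z) * sin (Im z)).

Definition stripU (z : C) : Prop := Rabs (Im z) < PI / 2.

Definition fB (z : C) : C := (Ci * Cexp z)%C.

(* its (complex) derivative, f'(xi) = i e^xi; the theorem also asserts this *)
Definition fprime (z : C) : C := (Ci * Cexp z)%C.

Definition C1_on (V : R * R -> Prop) (g : R * R -> C) : Prop :=
  exists gx gy : R * R -> C,
    forall p, V p ->
      is_derive (fun t : R => g (t, snd p)) (fst p) (gx p) /\
      is_derive (fun t : R => g (fst p, t)) (snd p) (gy p) /\
      continuous gx p /\ continuous gy p.

Definition burgers_sol (V : R * R -> Prop) (lam : R * R -> C) : Prop :=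
  C1_on V lam /\
  forall x y, V (x, y) ->
    0 < Im (lam (x, y)) /\
    stripU (RtoC y - lam (x, y) * RtoC x)%C /\
    lam (x, y) = fB (RtoC y - lam (x, y) * RtoC x)%C.

Definition burgers_admissible (V : R * R -> Prop) : Prop :=
  open V /\ (exists lam, burgers_sol V lam) /\
  (forall l1 l2, burgers_sol V l1 -> burgers_sol V l2 ->
     forall p, V p -> l1 p = l2 p).

(* Omega_f : the maximal such open set (union of all admissible open sets) *)
Definition Omega_f (p : R * R) : Prop :=
  exists V, burgers_admissible V /\ V p.

(** With [theta = Im (lambda x)], the equation [lambda = i exp (y - lambda x)] forces
    [Re (lambda x) = theta tan theta] and [G theta = x exp y], where
    [G theta = theta exp (theta tan theta) / cos theta] is an increasing bijection of
    [(-pi/2, pi/2)] onto the reals.  Hence the solution is unique and equals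
    [exp y * mu (x exp y)], where [mu] is [G^-1] followed by an explicit smooth map; the
    inverse function theorem makes it C^1 on the whole plane.  Since [f' = f],
    [J = 1 + lambda x = 1 + theta tan theta + i theta] with [theta tan theta >= 0], so
    [|J| >= 1], with equality iff [theta = 0], i.e. iff [x = 0]. *)

From Stdlib Require Import Reals Lra ClassicalEpsilon.
From Coquelicot Require Import Coquelicot.
Open Scope R_scope.

Definition C1_R (m dm : R -> R) : Prop := forall t, is_derive m t (dm t) /\ continuous dm t.

Section InverseFunction.

Variables (f df g : R -> R) (a b : R).
Hypothesis f_derive : forall e, a < e < b -> is_derive f e (df e).
Hypothesis df_pos : forall e, a < e < b -> 0 < df e.
Hypothesis g_range : forall t, a < g t < b.
Hypothesis f_g : forall t, f (g t) = t.

Lemma derive_pos_increasing x y : a < x -> y < b -> x < y -> f x < f y.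
Proof.
  intros hx hy hxy.
  apply (incr_function f (Finite a) (Finite b) df); simpl; auto.
  all: intros e h1 h2; first [apply f_derive | apply df_pos]; lra.
Qed.

Lemma inverse_increasing s t : s < t -> g s < g t.
Proof.
  intros hst. destruct (Rlt_le_dec (g s) (g t)) as [|[hlt|heq]]; auto.
  - pose proof (g_range s). pose proof (g_range t).
    pose proof (derive_pos_increasing (g t) (g s)) as hf. rewrite !f_g in hf. lra.
  - apply (f_equal f) in heq. rewrite !f_g in heq. lra.
Qed.

Lemma inverse_nondecreasing s t : s <= t -> g s <= g t.
Proof. intros [h|<-]; [left; apply inverse_increasing|]; lra. Qed.

Lemma is_derive_inverse t : is_derive g t (/ df (g t)).
Proof.
  pose proof (inverse_increasing (t - 1) (t + 1) ltac:(lra)) as hlu.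
  pose proof (g_range (t - 1)) as hl. pose proof (g_range (t + 1)) as hu.
  assert (hin : forall e, g (t - 1) <= e <= g (t + 1) -> a < e < b) by (intros; lra).
  assert (Prf : forall e, g (t - 1) <= e <= g (t + 1) -> derivable_pt f e).
  { intros e he. exists (df e). apply is_derive_Reals, f_derive, hin, he. }
  assert (hgt : g (t - 1) <= g t <= g (t + 1)) by (split; apply inverse_nondecreasing; lra).
  assert (hcont : continuity_pt g t).
  { apply (Ranalysis5.continuity_pt_recip_interv f g (g (t - 1)) (g (t + 1))); auto.
    - intros x y h1 h2 h3. apply derive_pos_increasing; lra.
    - intros x _ _. apply f_g.
    - intros x h1 h2. rewrite !f_g in *. split; apply inverse_nondecreasing; lra.
    - intros e he. apply continuity_pt_filterlim, (ex_derive_continuous f e).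
      exists (df e). apply f_derive, hin, he.
    - rewrite !f_g. lra. }
  assert (hdf : derive_pt f (g t) (Prf (g t) hgt) = df (g t)).
  { apply derive_pt_eq_0, is_derive_Reals, f_derive, hin, hgt. }
  pose proof (df_pos (g t) (hin _ hgt)) as hpos.
  apply is_derive_Reals. replace (/ df (g t)) with (1 / derive_pt f (g t) (Prf (g t) hgt)).
  - apply (Ranalysis5.derivable_pt_lim_recip_interv f g (t - 1) (t + 1) t Prf hcont);
      [lra | lra | intros x _; apply f_g | rewrite hdf; lra].
  - rewrite hdf. field. lra.
Qed.

Hypothesis df_continuous : forall e, a < e < b -> continuous df e.

Lemma C1_comp_inverse (F dF : R -> R) :
  (forall e, a < e < b -> is_derive F e (dF e) /\ continuous dF e) ->
  C1_R (fun s => F (g s)) (fun s => dF (g s) / df (g s)).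
Proof.
  intros hF t. destruct (hF (g t) (g_range t)) as [hd hc].
  pose proof (df_pos (g t) (g_range t)) as hpos.
  assert (hg : continuous g t).
  { apply (ex_derive_continuous g t). exists (/ df (g t)). apply is_derive_inverse. }
  split.
  - replace (dF (g t) / df (g t)) with (scal (/ df (g t)) (dF (g t)))
      by (rewrite Rmult_comm; reflexivity).
    exact (is_derive_comp F g t _ _ hd (is_derive_inverse t)).
  - apply (continuous_mult (K := R_AbsRing) (fun s => dF (g s)) (fun s => / df (g s))).
    + apply continuous_comp; auto.
    + apply continuous_Rinv_comp; [apply continuous_comp; auto; apply df_continuous, g_range | lra].
Qed.

End InverseFunction.

Lemma C_pair_decomp (a b : R) : ((a, b) : C) = plus (scal a ((1, 0) : C)) (scal b ((0, 1) : C)).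
Proof. apply injective_projections; cbn; unfold mult; cbn; ring. Qed.

Lemma is_derive_C_pair (f g : R -> R) x a b :
  is_derive f x a -> is_derive g x b ->
  is_derive (fun t => (f t, g t) : C) x ((a, b) : C).
Proof.
  intros hf hg. rewrite C_pair_decomp.
  apply (is_derive_ext (fun t => plus (scal (f t) ((1, 0) : C)) (scal (g t) ((0, 1) : C)))).
  { intros t. symmetry. apply C_pair_decomp. }
  apply (is_derive_plus (K := R_AbsRing) (V := C_R_NormedModule));
    apply (is_derive_scal_l (K := R_AbsRing) (V := C_R_NormedModule)); assumption.
Qed.

Lemma continuous_C_pair (f g : R * R -> R) p :
  continuous f p -> continuous g p -> continuous (fun q => (f q, g q) : C) p.
Proof.
  intros hf hg.
  apply (continuous_ext (fun q => plus (scal (f q) ((1, 0) : C)) (scal (g q) ((0, 1) : C)))).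
  { intros q. symmetry. apply C_pair_decomp. }
  apply (continuous_plus (K := R_AbsRing) (V := C_R_NormedModule));
    apply (continuous_scal_l (K := R_AbsRing) (V := C_R_NormedModule)); assumption.
Qed.

Definition C1_R2 (g : R * R -> R) : Prop :=
  exists gx gy : R * R -> R, forall p,
    is_derive (fun t => g (t, snd p)) (fst p) (gx p) /\
    is_derive (fun t => g (fst p, t)) (snd p) (gy p) /\
    continuous gx p /\ continuous gy p.

Lemma C1_on_C_pair (g1 g2 : R * R -> R) :
  C1_R2 g1 -> C1_R2 g2 -> C1_on (fun _ => True) (fun p => (g1 p, g2 p) : C).
Proof.
  intros [g1x [g1y h1]] [g2x [g2y h2]].
  exists (fun p => (g1x p, g2x p)), (fun p => (g1y p, g2y p)). intros p _.
  destruct (h1 p) as [d1x [d1y [c1x c1y]]], (h2 p) as [d2x [d2y [c2x c2y]]].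
  split; [|split; [|split]]; auto using is_derive_C_pair, continuous_C_pair.
Qed.

Definition exp_scaled (m : R -> R) (p : R * R) : R := exp (snd p) * m (fst p * exp (snd p)).

Lemma continuous_exp_snd p : continuous (fun q : R * R => exp (snd q)) p.
Proof.
  destruct p as [x y].
  apply (continuous_comp snd exp); [apply continuous_snd | apply continuous_exp].
Qed.

Lemma continuous_comp_mul_exp (h : R -> R) p :
  (forall t, continuous h t) -> continuous (fun q : R * R => h (fst q * exp (snd q))) p.
Proof.
  intros hh. apply continuous_comp; [|apply hh]. destruct p as [x y].
  apply (continuous_mult (K := R_AbsRing) (fun q : R * R => fst q) (fun q => exp (snd q)));
    [apply continuous_fst | apply continuous_exp_snd].
Qed.

Lemma C1_exp_scaled (m dm : R -> R) : C1_R m dm -> C1_R2 (exp_scaled m).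
Proof.
  intros hm.
  assert (m_cont : forall t, continuous m t).
  { intros t. apply (ex_derive_continuous m t). exists (dm t). apply hm. }
  assert (dm_cont : forall t, continuous dm t) by apply hm.
  exists (fun p => exp (snd p) * (dm (fst p * exp (snd p)) * exp (snd p))),
    (fun p => exp (snd p) * m (fst p * exp (snd p))
              + exp (snd p) * (dm (fst p * exp (snd p)) * (fst p * exp (snd p)))).
  intros [x y]; unfold exp_scaled; simpl. destruct (hm (x * exp y)) as [hd _].
  split; [|split; [|split]].
  - auto_derive. { exists (dm (x * exp y)); exact hd. }
    rewrite (is_derive_unique (fun t : R => m t) _ _ hd). ring.
  - auto_derive. { exists (dm (x * exp y)); exact hd. }
    rewrite (is_derive_unique (fun t : R => m t) _ _ hd). ring.
  - repeat apply (continuous_mult (K := R_AbsRing));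
      auto using continuous_exp_snd, continuous_comp_mul_exp.
  - apply (continuous_plus (K := R_AbsRing) (V := R_NormedModule));
      repeat apply (continuous_mult (K := R_AbsRing));
      auto using continuous_exp_snd, continuous_comp_mul_exp, continuous_fst.
Qed.

Definition in_strip (e : R) : Prop := - (PI / 2) < e < PI / 2.

Definition xtan (e : R) : R := e * sin e / cos e.
Definition G (e : R) : R := e * exp (xtan e) / cos e.
Definition dG (e : R) : R := exp (xtan e) / cos e * (1 + 2 * xtan e + (e / cos e) ^ 2).

Lemma cos_pos_strip e : in_strip e -> 0 < cos e.
Proof. intros [h1 h2]. apply cos_gt_0; lra. Qed.

Lemma xtan_nonneg e : in_strip e -> 0 <= xtan e.
Proof.
  intros he. pose proof (cos_pos_strip e he) as hc. destruct he as [h1 h2].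
  assert (0 <= e * sin e).
  { destruct (Rle_lt_dec 0 e).
    - apply Rmult_le_pos; auto. apply sin_ge_0; lra.
    - replace (e * sin e) with (- e * sin (- e)) by (rewrite sin_neg; ring).
      apply Rmult_le_pos; [lra|]. apply sin_ge_0; lra. }
  unfold xtan, Rdiv. apply Rmult_le_pos; auto. left. apply Rinv_0_lt_compat; auto.
Qed.

Lemma is_derive_G e : in_strip e -> is_derive G e (dG e).
Proof.
  intros he. pose proof (cos_pos_strip e he) as hc.
  unfold G, dG, xtan. auto_derive; [lra|].
  pose proof (sin2_cos2 e) as hs. unfold Rsqr in hs.
  assert (hs2 : sin e ^ 2 = 1 - cos e ^ 2) by nra.
  field_simplify; try lra. rewrite hs2. unfold Rdiv. ring.
Qed.

Lemma dG_pos e : in_strip e -> 0 < dG e.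
Proof.
  intros he. pose proof (cos_pos_strip e he). pose proof (xtan_nonneg e he).
  pose proof (exp_pos (xtan e)). pose proof (pow2_ge_0 (e / cos e)).
  unfold dG. apply Rmult_lt_0_compat; [apply Rdiv_lt_0_compat|]; lra.
Qed.

Lemma continuous_dG e : in_strip e -> continuous dG e.
Proof.
  intros he. pose proof (cos_pos_strip e he).
  apply (ex_derive_continuous dG). unfold dG, xtan. auto_derive. repeat split; lra.
Qed.

Lemma G_odd e : G (- e) = - G e.
Proof.
  unfold G, xtan. rewrite sin_neg, cos_neg.
  replace (- e * - sin e) with (e * sin e) by ring. unfold Rdiv. ring.
Qed.

Lemma G_unbounded M : 0 <= M -> exists e, in_strip e /\ 0 < e /\ M < G e.
Proof.
  intros hM. set (d := / (M + 2)).
  assert (hd : 0 < d) by (apply Rinv_0_lt_compat; lra).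
  assert (hd2 : d <= / 2) by (apply Rinv_le_contravar; lra).
  pose proof PI2_3_2.
  exists (PI / 2 - d).
  assert (he : in_strip (PI / 2 - d)) by (unfold in_strip; lra).
  split; [exact he | split; [lra|]].
  pose proof (cos_pos_strip _ he) as hc.
  assert (hcd : cos (PI / 2 - d) < d) by (rewrite cos_shift; apply sin_lt_x; auto).
  assert (hexp : 1 <= exp (xtan (PI / 2 - d))).
  { pose proof (exp_ineq1_le (xtan (PI / 2 - d))). pose proof (xtan_nonneg _ he). lra. }
  assert (M + 2 < / cos (PI / 2 - d)).
  { replace (M + 2) with (/ d) by (unfold d; rewrite Rinv_inv; reflexivity).
    apply Rinv_lt_contravar; nra. }
  assert (/ cos (PI / 2 - d) <= G (PI / 2 - d)).
  { unfold G. rewrite <- (Rmult_1_l (/ cos _)). unfold Rdiv.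
    apply Rmult_le_compat_r; [left; apply Rinv_0_lt_compat; auto | nra]. }
  lra.
Qed.

Lemma G_surjective t : exists e, in_strip e /\ G e = t.
Proof.
  destruct (G_unbounded (Rabs t) (Rabs_pos t)) as [a [[ha1 ha2] [ha0 hGa]]].
  pose proof (Rle_abs t). pose proof (Rle_abs (- t)). rewrite Rabs_Ropp in *.
  destruct (Ranalysis5.IVT_interv (fun e => G e - t) (- a) a) as [e [he hGe]].
  - intros e he. apply continuity_pt_minus; [|apply continuity_pt_const; intros ? ?; reflexivity].
    apply continuity_pt_filterlim, (ex_derive_continuous G).
    exists (dG e). apply is_derive_G. unfold in_strip; lra.
  - lra.
  - rewrite G_odd. lra.
  - lra.
  - exists e. split; [unfold in_strip|]; lra.
Qed.

Definition Ginv (t : R) : R := proj1_sig (constructive_indefinite_description _ (G_surjective t)).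

Lemma Ginv_spec t : in_strip (Ginv t) /\ G (Ginv t) = t.
Proof. unfold Ginv. apply proj2_sig. Qed.

Lemma G_increasing x y : in_strip x -> in_strip y -> x < y -> G x < G y.
Proof.
  intros [hx _] [_ hy]. exact (derive_pos_increasing G dG _ _ is_derive_G dG_pos x y hx hy).
Qed.

Lemma Ginv_unique t e : in_strip e -> G e = t -> Ginv t = e.
Proof.
  intros he hGe. destruct (Ginv_spec t) as [hs hG].
  destruct (Rtotal_order (Ginv t) e) as [hlt|[heq|hgt]]; auto.
  - pose proof (G_increasing _ _ hs he hlt). lra.
  - pose proof (G_increasing _ _ he hs hgt). lra.
Qed.

Lemma Ginv_eq_0 t : Ginv t = 0 <-> t = 0.
Proof.
  assert (hG0 : G 0 = 0) by (unfold G; lra).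
  split.
  - intros h. destruct (Ginv_spec t) as [_ hG]. rewrite h in hG. lra.
  - intros ->. apply Ginv_unique; [unfold in_strip; pose proof PI_RGT_0; lra | exact hG0].
Qed.

Definition dxtan (e : R) : R := sin e / cos e + e / cos e ^ 2.

Lemma is_derive_xtan e : in_strip e -> is_derive xtan e (dxtan e).
Proof.
  intros he. pose proof (cos_pos_strip e he).
  unfold xtan, dxtan. auto_derive; [lra|].
  pose proof (sin2_cos2 e) as hs. unfold Rsqr in hs. field_simplify; try lra.
  replace (sin e ^ 2) with (1 - cos e ^ 2) by nra. field. lra.
Qed.

Definition profile_re (e : R) : R := exp (- xtan e) * sin e.
Definition profile_im (e : R) : R := exp (- xtan e) * cos e.
Definition dprofile_re (e : R) : R := exp (- xtan e) * (cos e - dxtan e * sin e).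
Definition dprofile_im (e : R) : R := - exp (- xtan e) * (sin e + dxtan e * cos e).

Lemma C1_profile_re e :
  in_strip e -> is_derive profile_re e (dprofile_re e) /\ continuous dprofile_re e.
Proof.
  intros he. pose proof (cos_pos_strip e he). pose proof (is_derive_xtan e he) as hx. split.
  - unfold profile_re, dprofile_re. auto_derive; [exists (dxtan e); exact hx|].
    rewrite (is_derive_unique (fun t : R => xtan t) _ _ hx). ring.
  - apply (ex_derive_continuous dprofile_re).
    unfold dprofile_re, dxtan, xtan. auto_derive. repeat split; try lra; intro; nra.
Qed.

Lemma C1_profile_im e :
  in_strip e -> is_derive profile_im e (dprofile_im e) /\ continuous dprofile_im e.
Proof.
  intros he. pose proof (cos_pos_strip e he). pose proof (is_derive_xtan e he) as hx. split.
  - unfold profile_im, dprofile_im. auto_derive; [exists (dxtan e); exact hx|].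
    rewrite (is_derive_unique (fun t : R => xtan t) _ _ hx). ring.
  - apply (ex_derive_continuous dprofile_im).
    unfold dprofile_im, dxtan, xtan. auto_derive. repeat split; try lra; intro; nra.
Qed.

Lemma C1_comp_Ginv (F dF : R -> R) :
  (forall e, in_strip e -> is_derive F e (dF e) /\ continuous dF e) ->
  C1_R (fun t => F (Ginv t)) (fun t => dF (Ginv t) / dG (Ginv t)).
Proof.
  exact (C1_comp_inverse G dG Ginv _ _ is_derive_G dG_pos (fun t => proj1 (Ginv_spec t))
           (fun t => proj2 (Ginv_spec t)) continuous_dG F dF).
Qed.

Definition burgers_lambda (p : R * R) : C :=
  (exp_scaled (fun t => profile_re (Ginv t)) p, exp_scaled (fun t => profile_im (Ginv t)) p).

Lemma C1_on_burgers_lambda : C1_on (fun _ => True) burgers_lambda.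
Proof.
  apply C1_on_C_pair; eapply C1_exp_scaled, C1_comp_Ginv;
    [apply C1_profile_re | apply C1_profile_im].
Qed.

Lemma exp_scale_Ginv x y :
  exp y * exp (- xtan (Ginv (x * exp y))) * x = Ginv (x * exp y) / cos (Ginv (x * exp y)).
Proof.
  destruct (Ginv_spec (x * exp y)) as [hs hG]. set (e := Ginv (x * exp y)) in *.
  pose proof (cos_pos_strip e hs). unfold G in hG.
  replace (exp y * exp (- xtan e) * x) with (x * exp y * exp (- xtan e)) by ring.
  pose proof (exp_pos (xtan e)). rewrite <- hG, exp_Ropp. field. split; lra.
Qed.

Lemma burgers_lambda_mul_x x y :
  (burgers_lambda (x, y) * RtoC x)%C = (xtan (Ginv (x * exp y)), Ginv (x * exp y)).
Proof.
  pose proof (exp_scale_Ginv x y) as hscale.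
  destruct (Ginv_spec (x * exp y)) as [hs _]. set (e := Ginv (x * exp y)) in *.
  pose proof (cos_pos_strip e hs).
  unfold burgers_lambda, exp_scaled, profile_re, profile_im; simpl. fold e.
  apply injective_projections; simpl.
  - replace (exp y * (exp (- xtan e) * sin e) * x - exp y * (exp (- xtan e) * cos e) * 0)
      with (exp y * exp (- xtan e) * x * sin e) by ring.
    rewrite hscale. unfold xtan. field. lra.
  - replace (exp y * (exp (- xtan e) * sin e) * 0 + exp y * (exp (- xtan e) * cos e) * x)
      with (exp y * exp (- xtan e) * x * cos e) by ring.
    rewrite hscale. field. lra.
Qed.

Lemma fB_affine a b x y :
  fB (RtoC y - (a, b) * RtoC x)%C = (exp (y - a * x) * sin (b * x), exp (y - a * x) * cos (b * x)).
Proof.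
  unfold fB, Cexp, Ci; simpl.
  replace (0 + - (a * 0 + b * x)) with (- (b * x)) by ring.
  replace (y + - (a * x - b * 0)) with (y - a * x) by ring.
  rewrite cos_neg, sin_neg. apply injective_projections; simpl; ring.
Qed.

Lemma Im_affine a b x y : Im (RtoC y - (a, b) * RtoC x)%C = - (b * x).
Proof. simpl. ring. Qed.

Lemma burgers_lambda_solves x y :
  0 < Im (burgers_lambda (x, y)) /\
  stripU (RtoC y - burgers_lambda (x, y) * RtoC x)%C /\
  burgers_lambda (x, y) = fB (RtoC y - burgers_lambda (x, y) * RtoC x)%C.
Proof.
  pose proof (burgers_lambda_mul_x x y) as hmul.
  destruct (Ginv_spec (x * exp y)) as [hs _]. set (e := Ginv (x * exp y)) in *.
  pose proof (cos_pos_strip e hs).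
  assert (hexp : exp (y - xtan e) = exp y * exp (- xtan e)) by apply exp_plus.
  unfold burgers_lambda, exp_scaled, profile_re, profile_im in *; simpl in *. fold e in hmul |- *.
  set (a := exp y * (exp (- xtan e) * sin e)) in *.
  set (b := exp y * (exp (- xtan e) * cos e)) in *.
  assert (hax : a * x = xtan e) by (apply (f_equal fst) in hmul; simpl in hmul; lra).
  assert (hbx : b * x = e) by (apply (f_equal snd) in hmul; simpl in hmul; lra).
  split; [|split].
  - unfold b. pose proof (exp_pos y). pose proof (exp_pos (- xtan e)).
    apply Rmult_lt_0_compat; [|apply Rmult_lt_0_compat]; lra.
  - unfold stripU. rewrite Im_affine, hbx, Rabs_Ropp. destruct hs. apply Rabs_def1; lra.
  - rewrite fB_affine, hax, hbx, hexp. unfold a, b. apply injective_projections; simpl; ring.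
Qed.

Lemma burgers_solution_unique x y (L : C) :
  stripU (RtoC y - L * RtoC x)%C -> L = fB (RtoC y - L * RtoC x)%C ->
  L = burgers_lambda (x, y).
Proof.
  destruct L as [a b]. unfold stripU. rewrite Im_affine, fB_affine, Rabs_Ropp.
  intros hstrip heq.
  set (e := b * x) in *. set (E := exp (y - a * x)) in *.
  assert (hs : in_strip e) by (apply Rabs_def2 in hstrip; unfold in_strip; lra).
  pose proof (cos_pos_strip e hs).
  assert (ha : a = E * sin e) by (apply (f_equal fst) in heq; exact heq).
  assert (hb : b = E * cos e) by (apply (f_equal snd) in heq; exact heq).
  assert (he : e = E * cos e * x) by (rewrite <- hb; reflexivity).
  assert (hax : a * x = xtan e).
  { unfold xtan. rewrite he at 1. rewrite ha. field. lra. }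
  assert (hG : G e = x * exp y).
  { unfold G. rewrite <- hax.
    replace (exp y) with (E * exp (a * x)) by (unfold E; rewrite <- exp_plus; f_equal; ring).
    rewrite he at 1. field. lra. }
  unfold burgers_lambda, exp_scaled; simpl. rewrite (Ginv_unique _ _ hs hG).
  unfold profile_re, profile_im. rewrite ha, hb.
  replace E with (exp y * exp (- xtan e)) by (unfold E; rewrite hax, <- exp_plus; reflexivity).
  apply injective_projections; simpl; ring.
Qed.

Lemma burgers_admissible_everywhere : burgers_admissible (fun _ => True).
Proof.
  split; [apply open_true | split].
  - exists burgers_lambda. split; [exact C1_on_burgers_lambda|].
    intros x y _. apply burgers_lambda_solves.
  - intros l1 l2 [_ h1] [_ h2] [x y] _.
    destruct (h1 x y I) as [_ [s1 e1]], (h2 x y I) as [_ [s2 e2]].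
    rewrite (burgers_solution_unique _ _ _ s1 e1).
    exact (eq_sym (burgers_solution_unique _ _ _ s2 e2)).
Qed.

Lemma burgers_jacobian x y (L : C) :
  stripU (RtoC y - L * RtoC x)%C -> L = fB (RtoC y - L * RtoC x)%C ->
  (RtoC 1 + fprime (RtoC y - L * RtoC x) * RtoC x)%C
  = (1 + xtan (Ginv (x * exp y)), Ginv (x * exp y)).
Proof.
  intros hs heq. change fprime with fB. rewrite <- heq.
  rewrite (burgers_solution_unique _ _ _ hs heq), burgers_lambda_mul_x.
  apply injective_projections; simpl; ring.
Qed.

Lemma Cmod_one_plus_xtan e :
  in_strip e -> 1 <= Cmod (1 + xtan e, e) /\ (Cmod (1 + xtan e, e) = 1 <-> e = 0).
Proof.
  intros hs. pose proof (xtan_nonneg e hs).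
  pose proof (Cmod2_alt (1 + xtan e, e)) as hmod; unfold Re, Im in hmod; simpl in hmod.
  pose proof (Cmod_ge_0 (1 + xtan e, e)).
  split; [nra | split].
  - intros h1. rewrite h1 in hmod. nra.
  - intros ->. replace (xtan 0) with 0 by (unfold xtan; lra).
    rewrite Rplus_0_r. apply Cmod_1.
Qed.

Lemma is_derive_remainder (f : R -> R) x l :
  is_derive f x l -> forall eps, 0 < eps -> exists d, 0 < d /\
    forall h, Rabs h < d -> Rabs (f (x + h) - f x - l * h) <= eps * Rabs h.
Proof.
  intros hf eps heps. apply is_derive_Reals in hf.
  destruct (hf eps heps) as [d hd]. exists d. split; [apply cond_pos|].
  intros h hh. destruct (Req_dec h 0) as [->|hn0].
  - rewrite Rplus_0_r, Rabs_R0. replace (f x - f x - l * 0) with 0 by ring.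
    rewrite Rabs_R0. lra.
  - replace (f (x + h) - f x - l * h) with (((f (x + h) - f x) / h - l) * h) by (field; auto).
    rewrite Rabs_mult. apply Rmult_le_compat_r; [apply Rabs_pos|]. left. apply hd; auto.
Qed.

Lemma Cmod_pair_le (a b : R) : Cmod (a, b) <= Rabs a + Rabs b.
Proof.
  replace ((a, b) : C) with (RtoC a + Ci * RtoC b)%C
    by (apply injective_projections; simpl; ring).
  rewrite <- (Cmod_R a), <- (Cmod_R b), <- (Rmult_1_l (Cmod b)), <- Cmod_Ci, <- Cmod_mult.
  apply Cmod_triangle.
Qed.

Lemma Cmod_cis v : Cmod (cos v, sin v) = 1.
Proof.
  unfold Cmod. rewrite <- sqrt_1. f_equal. simpl.
  pose proof (sin2_cos2 v) as h. unfold Rsqr in h. lra.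
Qed.

Lemma Cexp_remainder_le u v e :
  0 < e <= 1 -> Cmod (u, v) <= e ->
  Rabs (exp u - 1 - u) <= e * Rabs u ->
  Rabs (cos v - 1) <= e * Rabs v -> Rabs (sin v - v) <= e * Rabs v ->
  Cmod (Cexp (u, v) - 1 - (u, v))%C <= 6 * e * Cmod (u, v).
Proof.
  intros he hr R_exp R_cos R_sin. set (r := Cmod (u, v)) in *.
  assert (hr0 : 0 <= r) by apply Cmod_ge_0.
  pose proof (Rmax_Cmod (u, v)) as hmax; simpl in hmax; fold r in hmax.
  pose proof (Rmax_l (Rabs u) (Rabs v)). pose proof (Rmax_r (Rabs u) (Rabs v)).
  assert (e * Rabs u <= e * r) by (apply Rmult_le_compat_l; lra).
  assert (e * Rabs v <= e * r) by (apply Rmult_le_compat_l; lra).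
  set (c := (cos v, sin v) : C).
  assert (decomp : (Cexp (u, v) - 1 - (u, v))%C
                   = (RtoC (exp u - 1 - u) * c + RtoC u * (c - 1) + (c - 1 - Ci * RtoC v))%C)
    by (unfold Cexp, c; apply injective_projections; simpl; ring).
  assert (rot_small : Cmod (c - 1 - Ci * RtoC v)%C <= 2 * e * r).
  { replace (c - 1 - Ci * RtoC v)%C with ((cos v - 1, sin v - v) : C)
      by (unfold c; apply injective_projections; simpl; ring).
    eapply Rle_trans; [apply Cmod_pair_le | lra]. }
  assert (rot_bound : Cmod (c - 1)%C <= 2 * e * r + r).
  { replace (c - 1)%C with ((c - 1 - Ci * RtoC v) + Ci * RtoC v)%C by ring.
    eapply Rle_trans; [apply Cmod_triangle|].
    rewrite Cmod_mult, Cmod_Ci, Cmod_R. lra. }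
  assert (term1 : Cmod (RtoC (exp u - 1 - u) * c)%C <= e * r)
    by (rewrite Cmod_mult, Cmod_R; unfold c; rewrite Cmod_cis; lra).
  assert (term2 : Cmod (RtoC u * (c - 1))%C <= 3 * e * r).
  { rewrite Cmod_mult, Cmod_R.
    assert (Rabs u * Cmod (c - 1)%C <= r * (2 * e * r + r))
      by (apply Rmult_le_compat; auto using Rabs_pos, Cmod_ge_0; lra).
    nra. }
  rewrite decomp.
  eapply Rle_trans; [apply Cmod_triangle|].
  eapply Rle_trans; [apply Rplus_le_compat_r, Cmod_triangle|].
  lra.
Qed.

Lemma Cexp_remainder eps : 0 < eps -> exists d, 0 < d /\
  forall h, Cmod h < d -> Cmod (Cexp h - 1 - h)%C <= eps * Cmod h.
Proof.
  intros heps. set (e := Rmin 1 (eps / 6)).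
  assert (he : 0 < e <= 1 /\ 6 * e <= eps).
  { unfold e. pose proof (Rmin_l 1 (eps / 6)). pose proof (Rmin_r 1 (eps / 6)).
    pose proof (Rmin_pos 1 (eps / 6) ltac:(lra) ltac:(lra)). lra. }
  assert (D_exp : is_derive exp 0 1) by (auto_derive; auto; rewrite exp_0; ring).
  assert (D_cos : is_derive cos 0 0) by (auto_derive; auto; rewrite sin_0; ring).
  assert (D_sin : is_derive sin 0 1) by (auto_derive; auto; rewrite cos_0; ring).
  destruct (is_derive_remainder _ _ _ D_exp e ltac:(lra)) as [d1 [hd1 R_exp]].
  destruct (is_derive_remainder _ _ _ D_cos e ltac:(lra)) as [d2 [hd2 R_cos]].
  destruct (is_derive_remainder _ _ _ D_sin e ltac:(lra)) as [d3 [hd3 R_sin]].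
  pose proof (Rmin_l e (Rmin d1 (Rmin d2 d3))). pose proof (Rmin_r e (Rmin d1 (Rmin d2 d3))).
  pose proof (Rmin_l d1 (Rmin d2 d3)). pose proof (Rmin_r d1 (Rmin d2 d3)).
  pose proof (Rmin_l d2 d3). pose proof (Rmin_r d2 d3).
  exists (Rmin e (Rmin d1 (Rmin d2 d3))). split; [repeat apply Rmin_pos; lra|].
  intros [u v] hr.
  pose proof (Rmax_Cmod (u, v)) as hmax; simpl in hmax.
  pose proof (Rmax_l (Rabs u) (Rabs v)). pose proof (Rmax_r (Rabs u) (Rabs v)).
  specialize (R_exp u ltac:(lra)). specialize (R_cos v ltac:(lra)). specialize (R_sin v ltac:(lra)).
  rewrite Rplus_0_l, exp_0, Rmult_1_l in R_exp.
  rewrite Rplus_0_l, cos_0, Rmult_0_l, Rminus_0_r in R_cos.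
  rewrite Rplus_0_l, sin_0, Rminus_0_r, Rmult_1_l in R_sin.
  eapply Rle_trans; [apply (Cexp_remainder_le u v e); auto; lra|].
  apply Rmult_le_compat_r; [apply Cmod_ge_0 | lra].
Qed.

Lemma is_derive_C_of_remainder (f : C -> C) z l :
  (forall eps, 0 < eps -> exists d, 0 < d /\
     forall h, Cmod h < d -> Cmod (f (z + h) - f z - h * l)%C <= eps * Cmod h) ->
  @is_derive C_AbsRing C_NormedModule f z l.
Proof.
  intros hf. split; [apply is_linear_scal_l|].
  intros x hx.
  apply (is_filter_lim_locally_unique (K := C_AbsRing) (V := AbsRing_NormedModule C_AbsRing)) in hx.
  subst x. intros eps.
  destruct (hf eps (cond_pos eps)) as [d [hd0 hd]].
  exists (mkposreal d hd0). intros y hy. specialize (hd (minus y z) hy).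
  replace (z + minus y z)%C with y in hd
    by (destruct y, z; apply injective_projections; simpl; unfold minus, plus, opp; simpl; ring).
  exact hd.
Qed.

Lemma Cexp_add z h : Cexp (z + h)%C = (Cexp z * Cexp h)%C.
Proof.
  destruct z as [a b], h as [c d]. unfold Cexp; simpl.
  rewrite exp_plus, cos_plus, sin_plus. apply injective_projections; simpl; ring.
Qed.

Lemma is_derive_fB z : @is_derive C_AbsRing C_NormedModule fB z (fprime z).
Proof.
  apply is_derive_C_of_remainder. intros eps heps.
  set (M := Cmod (fprime z)). assert (hM : 0 <= M) by apply Cmod_ge_0.
  destruct (Cexp_remainder (eps / (M + 1))) as [d [hd0 hd]]; [apply Rdiv_lt_0_compat; lra|].
  exists d. split; auto. intros h hh.
  replace (fB (z + h) - fB z - h * fprime z)%C with (fprime z * (Cexp h - 1 - h))%C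
    by (unfold fB, fprime; rewrite Cexp_add; ring).
  rewrite Cmod_mult. fold M. specialize (hd h hh).
  assert (0 <= Cmod h) by apply Cmod_ge_0.
  assert (M * Cmod (Cexp h - 1 - h)%C <= M * (eps / (M + 1) * Cmod h))
    by (apply Rmult_le_compat_l; auto).
  assert (M * (eps / (M + 1) * Cmod h) <= eps * Cmod h).
  { replace (M * (eps / (M + 1) * Cmod h)) with (M / (M + 1) * (eps * Cmod h)) by (field; lra).
    assert (M / (M + 1) <= 1) by (apply Rle_div_l; lra).
    assert (0 <= eps * Cmod h) by (apply Rmult_le_pos; lra). nra. }
  lra.
Qed.

Theorem theorem10p7 :
  (forall z : C, stripU z -> is_derive fB z (fprime z)) /\
  (forall p : R * R, Omega_f p) /\
  (forall lam : R * R -> C, burgers_sol (fun _ => True) lam ->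
     forall x y : R,
       let w0 := (RtoC y - lam (x, y) * RtoC x)%C in
       let J := (RtoC 1 + fprime w0 * RtoC x)%C in
       1 <= Cmod J /\ (Cmod J = 1 <-> x = 0)).
Proof.
  split; [|split].
  - intros z _. apply is_derive_fB.
  - intros p. exists (fun _ => True). split; [exact burgers_admissible_everywhere | exact I].
  - intros lam [_ hsol] x y w0 J.
    destruct (hsol x y I) as [_ [hs heq]].
    unfold J, w0. rewrite (burgers_jacobian x y _ hs heq).
    destruct (Cmod_one_plus_xtan _ (proj1 (Ginv_spec (x * exp y)))) as [hge hiff].
    split; [exact hge|]. rewrite hiff, Ginv_eq_0.
    pose proof (exp_pos y). split; [|intros ->; ring].
    intros h. apply Rmult_integral in h. lra.
Qed.
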